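(* Let $G=(V,E)$ be a strongly connected digraph, $s\in V$, and let $v,w$ be two distinct vertices of $G$. Then $v \leftrightarrow_{\mathrm{2e}} w$ in $G$ if and only if there is a subtree root $r$ such that $v$ and $w$ are both ordinary vertices of the auxiliary graph $G_r$ (i.e., $v,w\in T(r)$) and $v \leftrightarrow_{\mathrm{2e}} w$ in $G_r$.
   Context: For vertices $v,w$ of a digraph $H$, $v \leftrightarrow_{\mathrm{2e}} w$ in $H$ means $v=w$, or there are two edge-disjoint directed paths from $v$ to $w$ and two edge-disjoint directed paths from $w$ to $v$ in $H$. For a digraph $G=(V,E)$ and $s\in V$ with every vertex reachable from $s$: $u$ dominates $w$ in the flow graph $G(s)$ if every path from $s$ to $w$ contains $u$; the dominator tree $D(s)$ is the rooted tree on $V$ with root $s$ in which $u$ is an ancestor of $w$ iff $u$ dominates $w$; $d(w)$ is the parent of $w\neq s$. An edge $(u,w)$ is a bridge of $G(s)$ if every path from $s$ to $w$ contains it (then $u=d(w)$). A vertex $w\neq s$ is marked if $(d(w),w)$ is a bridge. Deleting from $D(s)$ all edges $(d(w),w)$ with $w$ marked decomposes $D(s)$ into subtrees rooted at $s$ or at marked vertices; $T(v)$ is the subtree containing $v$. A vertex $x\in T(r)$ is a boundary vertex of $T(r)$ if $x$ has a marked child in $D(s)$. Auxiliary graph: for a subtree root $r$ that is not a leaf of $D(s)$, $G_r=(V_r,E_r)$ has ordinary vertices $V_r^o$ = the vertices of $T(r)$ and auxiliary vertices $V_r^a$ consisting of: a copy of each marked child $z$ of each boundary vertex $x$ of $T(r)$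 (with the edge $(x,z)$ in $E_r$), and, if $r\neq s$, a copy of $d(r)$ (with the edge $(d(r),r)$ in $E_r$). $E_r$ further contains all edges of $E$ with both endpoints in $T(r)$, plus the following shortcut edges, for each $(u,v)\in E$: (a) if $u\in T(r)$ and $v$ is not a descendant of $r$ in $D(s)$, the edge $(u,d(r))$; (b) if $v\in T(r)$ and $u$ is a descendant in $D(s)$ of a marked child $z$ of a boundary vertex of $T(r)$, the edge $(z,v)$; (c) if $u$ is a descendant in $D(s)$ of a marked child $z$ of a boundary vertex of $T(r)$ and $v$ is not a descendant of $r$ in $D(s)$, the edge $(z,d(r))$. Parallel duplicate edges are not kept. *)

From mathcomp Require Import all_boot.
Set Implicit Arguments. Unset Strict Implicit. Unset Printing Implicit Defensive.

Section Digraphs.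
Variable V : finType.

Fixpoint walk (R : V -> V -> Prop) (x : V) (p : seq V) : Prop :=
  match p with
  | [::] => True
  | y :: q => R x y /\ walk R y q
  end.

Definition walk_edges (x : V) (p : seq V) : seq (V * V) := zip (x :: p) p.

Definition two_edge_disjoint_paths (R : V -> V -> Prop) (x y : V) : Prop :=
  exists p q : seq V,
    [/\ walk R x p, last x p = y, walk R x q, last x q = y &
        all (fun e => e \notin walk_edges x q) (walk_edges x p)].

Definition two_edge_conn (R : V -> V -> Prop) (v w : V) : Prop :=
  v = w \/ (two_edge_disjoint_paths R v w /\ two_edge_disjoint_paths R w v).

Definition edgeP (E : rel V) : V -> V -> Prop := fun a b => E a b.

Definition strongly_connected (E : rel V) : Prop :=
  forall x y : V, exists p, walk (edgeP E) x p /\ last x p = y.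

Definition dom (E : rel V) (s u w : V) : Prop :=
  forall p, walk (edgeP E) s p -> last s p = w -> u \in s :: p.

Definition idom (E : rel V) (s u w : V) : Prop :=
  [/\ w <> s, u <> w, dom E s u w &
      forall x, x <> w -> dom E s x w -> dom E s x u].

Definition bridge (E : rel V) (s u w : V) : Prop :=
  E u w /\ forall p, walk (edgeP E) s p -> last s p = w ->
                     (u, w) \in walk_edges s p.

Definition marked (E : rel V) (s w : V) : Prop :=
  w <> s /\ exists u, idom E s u w /\ bridge E s u w.

Definition subtree_root (E : rel V) (s r : V) : Prop := r = s \/ marked E s r.

(* x belongs to T(r): x lies below r in D(s) and the tree path from r to x
   contains no deleted (marked) edge *)
Definition inT (E : rel V) (s r x : V) : Prop :=
  [/\ subtree_root E s r, dom E s r x &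
      forall y, y <> r -> dom E s r y -> dom E s y x -> ~ marked E s y].

(* z is a marked child of a boundary vertex of T(r) (an auxiliary vertex) *)
Definition aux_child (E : rel V) (s r z : V) : Prop :=
  marked E s z /\ exists x, inT E s r x /\ idom E s x z.

(* edge relation E_r of the auxiliary graph G_r.  Auxiliary vertices are
   represented by the original vertices they copy (these never lie in T(r)). *)
Definition aux_edge (E : rel V) (s r : V) (a b : V) : Prop :=
  (inT E s r a /\ marked E s b /\ idom E s a b) \/
  (r <> s /\ b = r /\ idom E s a r) \/
  (inT E s r a /\ inT E s r b /\ E a b) \/
  (exists v, [/\ E a v, inT E s r a, ~ dom E s r v & idom E s b r]) \/
  (exists u, [/\ E u b, inT E s r b, aux_child E s r a & dom E s a u]) \/
  (exists u v, [/\ E u v, aux_child E s r a, dom E s a u,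
                       ~ dom E s r v & idom E s b r]).

End Digraphs.

(* Two-edge connectivity never crosses a bridge [(d(z), z)] of [G(s)]: every
   walk entering the dominator subtree of [z] uses that edge, so a vertex below
   [z] and one outside cannot be joined by two edge-disjoint paths.  Hence
   [v <->2e w] puts [v] and [w] in the same [T(r)], and the relevant paths only
   matter up to the contraction of each subtree below a marked child [z] of
   [T(r)] onto [z] and of everything outside the subtree of [r] onto [d(r)].
   This contraction maps walks of [G] to walks of [G_r]; conversely every edge
   of [G_r] expands to a walk of [G] through the contracted region.  In both
   directions edge-disjointness survives because a contracted vertex can only
   be entered through a single edge, which two edge-disjoint walks cannot both
   use. *)

From mathcomp Require Import all_boot.
From Stdlib Require Import ClassicalEpsilon Classical.
Set Implicit Arguments. Unset Strict Implicit. Unset Printing Implicit Defensive.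

Section Walks.
Variable V : finType.
Implicit Types (R : V -> V -> Prop) (Q : pred V) (x y : V) (p q : seq V).

Lemma walk_cat R x p q : walk R x (p ++ q) <-> walk R x p /\ walk R (last x p) q.
Proof. by elim: p x => [|y p IH] x /=; [tauto | rewrite IH; tauto]. Qed.

Lemma walk_edges_cons x y p : walk_edges x (y :: p) = (x, y) :: walk_edges y p.
Proof. by []. Qed.

Lemma walk_edges_cat x p q :
  walk_edges x (p ++ q) = walk_edges x p ++ walk_edges (last x p) q.
Proof. by elim: p x => [|y p IH] x //=; rewrite /walk_edges /= -IH. Qed.

Lemma mem_walk_edges x p a b : (a, b) \in walk_edges x p -> a \in x :: p /\ b \in p.
Proof.
elim: p x => [|y p IH] x //=; rewrite in_cons => /orP [/eqP [-> ->]|/IH [Ha Hb]].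
  by rewrite !mem_head.
by split; rewrite in_cons ?Ha ?Hb orbT.
Qed.

Lemma walk_edge R x p a b : walk R x p -> (a, b) \in walk_edges x p -> R a b.
Proof.
elim: p x => [|y p IH] x //= [Hxy Hw].
by rewrite in_cons => /orP [/eqP [-> ->] //|/IH]; apply.
Qed.

Lemma notin_walk_edges x p a b : b \notin p -> (a, b) \notin walk_edges x p.
Proof. by apply: contra => /mem_walk_edges []. Qed.

Lemma mem_walk_edges_endpoint x p a b t : (a, b) \in walk_edges x p ->
  t = a \/ t = b -> t \in x :: p.
Proof. by move=> /mem_walk_edges [Ha Hb] [->|->] //; rewrite in_cons Hb orbT. Qed.

Lemma in_walk_edges (P : V -> Prop) x p a b : {in x :: p, forall t, P t} ->
  (a, b) \in walk_edges x p -> P a /\ P b.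
Proof.
by move=> HP Hab; split; apply: HP; apply: mem_walk_edges_endpoint Hab _; [left | right].
Qed.

Lemma edge_disjoint_common x p q e :
  all (fun e => e \notin walk_edges x q) (walk_edges x p) ->
  e \in walk_edges x p -> e \in walk_edges x q -> False.
Proof. by move=> /allP Hd /Hd /negP. Qed.

Lemma split_last y x p : y \in x :: p ->
  exists p1 p2, [/\ p = p1 ++ p2, last x p1 = y & y \notin p2].
Proof.
elim/last_ind: p => [|p z IH]; first by rewrite mem_seq1 => /eqP ->; exists [::], [::].
have [->|Hyz] := eqVneq y z; first by exists (rcons p z), [::]; rewrite cats0 last_rcons.
rewrite -rcons_cons mem_rcons in_cons (negPf Hyz) /= => /IH [p1 [p2 [-> H1 H2]]].
exists p1, (rcons p2 z); rewrite rcons_cat mem_rcons in_cons (negPf Hyz).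
by split.
Qed.

Lemma split_first Q x p : has Q (x :: p) ->
  exists p1 p2, [/\ p = p1 ++ p2, Q (last x p1) & ~~ has Q (belast x p1)].
Proof.
elim: p x => [|y p IH] x /=; first by rewrite orbF => Hx; exists [::], [::].
case: (boolP (Q x)) => [Hx _|Hx /= /IH [p1 [p2 [-> H1 H2]]]].
  by exists [::], (y :: p).
by exists (y :: p1), p2; rewrite /= (negPf Hx).
Qed.

Lemma split_first_entry Q x p : ~~ Q x -> has Q p ->
  exists p1 b p2, [/\ p = p1 ++ b :: p2, all (predC Q) (x :: p1) & Q b].
Proof.
elim: p x => [|y p IH] x //= Hx; case: (boolP (Q y)) => Hy /=.
  by exists [::], y, p; rewrite /= Hx.
case/(IH y Hy) => p1 [b [p2 [-> H1 H2]]].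
by exists (y :: p1), b, p2; rewrite /= Hx.
Qed.

Lemma entering_edge Q x p : ~~ Q x -> has Q p ->
  exists a b, [/\ (a, b) \in walk_edges x p, ~~ Q a & Q b].
Proof.
move=> Hx /(split_first_entry Hx) [p1 [b [p2 [-> /allP H1 H2]]]].
exists (last x p1), b; split => //; last exact: H1 (mem_last _ _).
by rewrite walk_edges_cat mem_cat mem_head orbT.
Qed.

Lemma leaving_edge Q x p : has Q (x :: p) -> ~~ Q (last x p) ->
  exists a b, [/\ (a, b) \in walk_edges x p, Q a & ~~ Q b].
Proof.
move=> /hasP [t Ht Qt] Hl; have [p1 [p2 [Hp Hl1 _]]] := split_last Ht.
have Hlast : last t p2 = last x p by rewrite Hp last_cat Hl1.
have Hp2 : has (predC Q) p2.
  case: p2 {Hp} Hlast => [|z p2] Hlast; first by move: Hl; rewrite -Hlast /= Qt.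
  by apply/hasP; exists (last z p2); [exact: mem_last | move: Hl; rewrite -Hlast].
have Ht' : ~~ predC Q t by rewrite /= Qt.
have [a [b [Hab Ha Hb]]] := entering_edge Ht' Hp2.
exists a, b; rewrite Hp walk_edges_cat mem_cat Hl1 Hab orbT.
by split; rewrite // -[Q a]negbK.
Qed.

End Walks.

Section Dominators.
Variables (V : finType) (E : rel V) (s : V).
Hypothesis Hsc : strongly_connected E.
Local Notation R := (edgeP E).
Local Notation dom := (dom E s).
Implicit Types (a b u x y z : V) (p q : seq V).

Lemma dom_refl x : dom x x.
Proof. by move=> p _ <-; rewrite mem_last. Qed.

Lemma dom_source x : dom s x.
Proof. by move=> p _ _; rewrite mem_head. Qed.

Lemma dom_trans a b c : dom a b -> dom b c -> dom a c.
Proof.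
move=> Hab Hbc p Hp Hl; have [p1 [p2 [Hpe Hl1 _]]] := split_last (Hbc p Hp Hl).
move: Hp; rewrite Hpe walk_cat => -[/(Hab p1)/(_ Hl1)].
by rewrite -cat_cons mem_cat => ->.
Qed.

Lemma not_domP a b : ~ dom a b ->
  exists p, [/\ walk R s p, last s p = b & a \notin s :: p].
Proof.
move=> Hab; apply: NNPP => Hno; apply: Hab => p Hp Hl.
by apply: contraT => Ha; case: Hno; exists p.
Qed.

Lemma dom_antisym a b : dom a b -> dom b a -> a = b.
Proof.
move=> Hab Hba; have [p [Hp Hl]] := Hsc s a.
have : has (pred2 a b) (s :: p).
  by apply/hasP; exists a; rewrite /= ?eqxx // -Hl mem_last.
case/split_first => p1 [p2 [Hpe Hc Hfirst]].
have Hp1 : walk R s p1 by move: Hp; rewrite Hpe walk_cat => -[].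
have on_prefix t : t \in s :: p1 -> pred2 a b t -> t = last s p1.
  rewrite lastI mem_rcons in_cons => /orP [/eqP //|Ht Hab_t].
  by move: Hfirst; rewrite (introT hasP) //; exists t.
case/orP: Hc => /eqP Hc.
- by rewrite -Hc; apply/esym/on_prefix; [exact: Hba p1 Hp1 Hc | rewrite /= eqxx orbT].
- by rewrite -Hc; apply: on_prefix; [exact: Hab p1 Hp1 Hc | rewrite /= eqxx].
Qed.

(* A walk from [a] to [x] avoiding [b] prolongs any [b]-avoiding walk to [a]. *)
Lemma dom_of_avoiding_walk b a x p : dom b x -> walk R a p -> last a p = x ->
  b \notin p -> dom b a.
Proof.
move=> Hbx Hp Hl Hb q Hq Hlq; apply: contraT => Hbq.
have Hw : walk R s (q ++ p) by apply/walk_cat; rewrite Hlq.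
have Hlw : last s (q ++ p) = x by rewrite last_cat Hlq.
by move: (Hbx _ Hw Hlw); rewrite -cat_cons mem_cat (negPf Hbq) (negPf Hb).
Qed.

(* Of [a] and [b], the one visited last on a walk from [s] to [x] is dominated
   by the other. *)
Lemma dom_total x a b : dom a x -> dom b x -> dom a b \/ dom b a.
Proof.
move=> Hax Hbx; have [p [Hp Hl]] := Hsc s x.
have [pa1 [pa2 [Ha Hla Hna]]] := split_last (Hax p Hp Hl).
have [pb1 [pb2 [Hb Hlb Hnb]]] := split_last (Hbx p Hp Hl).
have later c d p1 p2 q1 q2 : dom d x -> p = p1 ++ p2 -> last s p1 = c ->
    p = q1 ++ q2 -> d \notin q2 -> size q1 <= size p1 -> dom d c.
  move=> Hdx Hpe Hlc Hqe Hd Hsz; apply: (dom_of_avoiding_walk (p := p2) Hdx).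
  - by move: Hp; rewrite Hpe walk_cat Hlc => -[].
  - by rewrite -Hlc -last_cat -Hpe.
  - have -> : p2 = drop (size p1) p by rewrite Hpe drop_size_cat.
    by apply: contra Hd; rewrite Hqe drop_cat ltnNge Hsz; apply: mem_drop.
case: (leqP (size pb1) (size pa1)) => Hsz.
  by right; apply: (later a b pa1 pa2 pb1 pb2).
by left; apply: (later b a pb1 pb2 pa1 pa2) => //; exact: ltnW.
Qed.

Lemma idom_dom u z : idom E s u z -> dom u z.
Proof. by case. Qed.

Lemma idom_uniq u u' z : idom E s u z -> idom E s u' z -> u = u'.
Proof.
move=> [_ Huz Hu Hmax] [_ Hu'z Hu' Hmax'].
by apply: dom_antisym; [apply: Hmax' | apply: Hmax].
Qed.

Lemma idom_not_dom u z : idom E s u z -> ~ dom z u.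
Proof. by move=> [_ Huz Hu _] Hzu; apply: Huz; apply: dom_antisym. Qed.

Lemma bridge_edge u z : bridge E s u z -> E u z.
Proof. by case. Qed.

Lemma bridge_on_walk u z y p : bridge E s u z -> dom z y -> walk R s p ->
  last s p = y -> (u, z) \in walk_edges s p.
Proof.
move=> [_ Hbr] Hzy Hp Hl; have [p1 [p2 [Hpe Hl1 _]]] := split_last (Hzy p Hp Hl).
have Hp1 : walk R s p1 by move: Hp; rewrite Hpe walk_cat => -[].
by rewrite Hpe walk_edges_cat mem_cat (Hbr p1 Hp1 Hl1).
Qed.

(* Take the part of a walk from [s] to [u] after its last visit to [z]. *)
Lemma walk_in_dom_subtree z u : dom z u ->
  exists p, [/\ walk R z p, last z p = u & {in z :: p, forall t, dom z t}].
Proof.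
move=> Hzu; have [p [Hp Hl]] := Hsc s u.
have [p1 [p2 [Hpe Hl1 Hzn]]] := split_last (Hzu p Hp Hl).
have [Hp1 Hp2] : walk R s p1 /\ walk R z p2 by move: Hp; rewrite Hpe walk_cat Hl1.
have Hl2 : last z p2 = u by rewrite -Hl1 -last_cat -Hpe.
exists p2; split => // t Ht; apply: NNPP => /not_domP [q [Hq Hlq Hzq]].
have [q1 [q2 [Hqe Hlq1 _]]] := split_last Ht.
have Hq2 : walk R t q2 by move: Hp2; rewrite Hqe walk_cat Hlq1 => -[].
have Hw : walk R s (q ++ q2) by apply/walk_cat; rewrite Hlq.
have Hlw : last s (q ++ q2) = u by rewrite last_cat Hlq -Hlq1 -last_cat -Hqe.
move: (Hzu _ Hw Hlw); rewrite -cat_cons mem_cat (negPf Hzq) /= => Hz2.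
by move: Hzn; rewrite Hqe mem_cat Hz2 orbT.
Qed.

(* Prefix the walk with one from [s] that avoids [z]. *)
Lemma bridge_separates u z a b p : bridge E s u z -> dom z b -> ~ dom z a ->
  walk R a p -> last a p = b -> (u, z) \in walk_edges a p.
Proof.
move=> Hbr Hzb /not_domP [q [Hq Hlq Hzq]] Hp Hl.
have Hw : walk R s (q ++ p) by apply/walk_cat; rewrite Hlq.
have Hlw : last s (q ++ p) = b by rewrite last_cat Hlq.
move: (bridge_on_walk Hbr Hzb Hw Hlw); rewrite walk_edges_cat mem_cat Hlq.
have Hzq' : z \notin q by move: Hzq; rewrite in_cons negb_or => /andP [].
by rewrite (negPf (notin_walk_edges _ _ Hzq')).
Qed.

Lemma bridge_entering_edge u z a b : bridge E s u z -> dom z b -> ~ dom z a -> E a b ->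
  a = u /\ b = z.
Proof.
move=> Hbr Hzb Hza Eab.
have := bridge_separates (p := [:: b]) Hbr Hzb Hza (conj Eab I) erefl.
by rewrite mem_seq1 => /eqP [-> ->].
Qed.

Lemma bridge_no_two_paths u z a b : bridge E s u z -> dom z b -> ~ dom z a ->
  ~ two_edge_disjoint_paths R a b.
Proof.
move=> Hbr Hzb Hza [p [q [Hp Hlp Hq Hlq Hd]]].
exact: edge_disjoint_common Hd (bridge_separates Hbr Hzb Hza Hp Hlp)
  (bridge_separates Hbr Hzb Hza Hq Hlq).
Qed.

End Dominators.

Definition asbool (P : Prop) : bool :=
  if excluded_middle_informative P then true else false.

Lemma asboolP (P : Prop) : reflect P (asbool P).
Proof. by rewrite /asbool; case: excluded_middle_informative => H; constructor. Qed.

Section Decomposition.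
Variables (V : finType) (E : rel V) (s : V).
Hypothesis Hsc : strongly_connected E.
Local Notation dom := (dom E s).

Definition dominators (y : V) : {set V} := [set t | asbool (dom t y)].

Lemma card_dominators_lt a b : dom a b -> a <> b ->
  #|dominators a| < #|dominators b|.
Proof.
move=> Hab Hne; apply/proper_card/properP; split.
  by apply/subsetP => t; rewrite !inE => /asboolP Hta; apply/asboolP; apply: dom_trans Hab.
exists b; rewrite inE; apply/asboolP; first exact: dom_refl.
by move=> Hba; apply: Hne; apply: dom_antisym Hba.
Qed.

Lemma not_inT r x : subtree_root E s r -> dom r x -> ~ inT E s r x ->
  exists y, [/\ y <> r, dom r y, dom y x & marked E s y].
Proof.
move=> Hr Hrx Hx; apply: NNPP => Hno; apply: Hx; split => // y Hyr Hry Hyx Hy.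
by apply: Hno; exists y.
Qed.

(* [T(r)] for the deepest subtree root [r] dominating [v] contains [v]. *)
Lemma inT_exists v : exists r, inT E s r v.
Proof.
pose P r := asbool (subtree_root E s r /\ dom r v).
have Ps : P s by apply/asboolP; split; [left | exact: dom_source].
case: (arg_maxnP (fun r => #|dominators r|) Ps) => r /asboolP [Hr Hrv] Hmax.
exists r; split => // y Hyr Hry Hyv Hy.
have Py : P y by apply/asboolP; split => //; right.
by move: (Hmax y Py); rewrite /= leqNgt card_dominators_lt //; apply: nesym.
Qed.

Lemma inT_two_paths r v w : inT E s r v ->
  two_edge_disjoint_paths (edgeP E) v w -> two_edge_disjoint_paths (edgeP E) w v ->
  inT E s r w.
Proof.
move=> [Hr Hrv Hclosed] Hvw Hwv.
have Hrw : dom r w.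
  case: (Hr) => [->|[_ [u [_ Hbr]]]]; first exact: dom_source.
  by apply: NNPP => Hrw; exact: (bridge_no_two_paths Hbr Hrv Hrw Hwv).
split => // y Hyr Hry Hyw Hy; have [_ [u [_ Hbr]]] := Hy.
case: (classic (dom y v)) => Hyv; first exact: Hclosed Hyv Hy.
exact: (bridge_no_two_paths Hbr Hyw Hyv Hvw).
Qed.

End Decomposition.

Section Contraction.
Variables (V : finType) (E : rel V) (s r : V).
Hypothesis Hsc : strongly_connected E.
Hypothesis Hr : subtree_root E s r.
Local Notation R := (edgeP E).
Local Notation dom := (dom E s).
Local Notation In := (inT E s r).
Local Notation aux := (aux_child E s r).
Implicit Types (a b c d t u x y z : V) (p q : seq V).

Lemma inT_root : In r.
Proof.
split=> [//||y Hyr Hry Hyr']; first exact: dom_refl.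
by case: Hyr; apply: dom_antisym Hyr' Hry.
Qed.

Lemma inT_dom x : In x -> dom r x.
Proof. by case. Qed.

Lemma aux_childP z : aux z -> [/\ z <> r, dom r z, ~ In z & marked E s z].
Proof.
move=> [Hz [x [Hx Hxz]]]; have Hrz : dom r z := dom_trans (inT_dom Hx) (idom_dom Hxz).
have Hzr : z <> r by move=> Hzr; subst z; apply: (idom_not_dom Hsc Hxz (inT_dom Hx)).
by split => // -[_ _ HT]; apply: (HT z) => //; exact: dom_refl.
Qed.

Lemma aux_child_below_notin z t : aux z -> dom z t -> ~ In t.
Proof.
move=> Hz Hzt [_ _ HT]; case: (aux_childP Hz) => Hzr Hrz _ Hmz.
exact: (HT z Hzr Hrz Hzt Hmz).
Qed.

Lemma aux_child_uniq z z' t : aux z -> aux z' -> dom z t -> dom z' t -> z = z'.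
Proof.
have below c c' : aux c -> aux c' -> dom c c' -> c = c'.
  move=> Hc [_ [x [Hx [_ _ _ Hmax]]]] Hcc'; apply: NNPP => Hne.
  exact: (aux_child_below_notin Hc (Hmax c Hne Hcc') Hx).
move=> Hz Hz' Hzt Hz't; case: (dom_total Hsc Hzt Hz't) => H; first exact: below.
exact/esym/below.
Qed.

(* The topmost marked vertex strictly between [r] and [t] is a child of [T(r)]. *)
Lemma aux_child_exists t : dom r t -> ~ In t -> exists z, aux z /\ dom z t.
Proof.
move=> Hrt Ht; pose P y := asbool [/\ y <> r, dom r y, dom y t & marked E s y].
have [y0 Hy0] := not_inT Hr Hrt Ht; have Py0 : P y0 by apply/asboolP.
case: (arg_minnP (fun y => #|dominators E s y|) Py0) => y /asboolP [Hyr Hry Hyt Hy] Hmin.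
have [_ [u [Huy Hbr]]] := Hy; exists y; split => //; split => //; exists u; split => //.
have Hru : dom r u by case: Huy => _ _ _; apply; [exact: nesym |].
apply: NNPP => Hu; have [y' [Hy'r Hry' Hy'u Hy']] := not_inT Hr Hru Hu.
have Hy'y : dom y' y := dom_trans Hy'u (idom_dom Huy).
have Hne : y' <> y by move=> Hyy'; subst y'; exact: (idom_not_dom Hsc Huy).
have Py' : P y' by apply/asboolP; split => //; exact: dom_trans Hyt.
by move: (Hmin y' Py'); rewrite leqNgt (card_dominators_lt Hsc Hy'y Hne).
Qed.

Lemma aux_child_bridge z : aux z -> exists u, [/\ In u, idom E s u z & bridge E s u z].
Proof.
move=> [[_ [u [Hu Hbr]]] [x [Hx Hxz]]].
by have Hux := idom_uniq Hsc Hu Hxz; subst u; exists x.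
Qed.

(* [d(r)]; an arbitrary value (namely [r]) when [r = s]. *)
Definition root_parent := odflt r [pick u | asbool (idom E s u r)].

Lemma root_parentP : r <> s ->
  [/\ idom E s root_parent r, bridge E s root_parent r & ~ dom r root_parent].
Proof.
move=> Hrs; have [_ [u [Hu Hb]]] : marked E s r by case: Hr.
rewrite /root_parent; case: pickP => [u' /asboolP Hu' | /(_ u) /asboolP //] /=.
rewrite -(idom_uniq Hsc Hu Hu'); split => //; exact: idom_not_dom Hu.
Qed.

Lemma not_dom_root t : ~ dom r t -> r <> s.
Proof. by move=> Ht Hrs; apply: Ht; rewrite Hrs; exact: dom_source. Qed.

(* The vertex of [G_r] standing for [t]: [t] itself in [T(r)], the auxiliary
   child above [t] below [T(r)], and [d(r)] outside the subtree of [r]. *)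
Definition contract t :=
  if asbool (In t) then t
  else if asbool (dom r t) then odflt t [pick z | asbool (aux z /\ dom z t)]
  else root_parent.

Lemma zoneP t : [\/ In t, exists z, aux z /\ dom z t | ~ dom r t].
Proof.
case: (classic (In t)) => Ht; first by constructor 1.
case: (classic (dom r t)) => Hrt; last by constructor 3.
by constructor 2; exact: aux_child_exists.
Qed.

Lemma contract_inT t : In t -> contract t = t.
Proof. by rewrite /contract; case: asboolP. Qed.

Lemma contract_aux z t : aux z -> dom z t -> contract t = z.
Proof.
move=> Hz Hzt; have [_ Hrz _ _] := aux_childP Hz.
rewrite /contract; case: asboolP => [Ht|_].
  by case: (aux_child_below_notin Hz Hzt Ht).
case: asboolP => [_|[]]; last exact: dom_trans Hzt.
case: pickP => [z' /asboolP [Hz' Hz't] | /(_ z) /asboolP []] //=.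
exact: aux_child_uniq Hz't Hzt.
Qed.

Lemma contract_aux_child z : aux z -> contract z = z.
Proof. by move=> Hz; apply: contract_aux Hz _; exact: dom_refl. Qed.

Lemma contract_out t : ~ dom r t -> contract t = root_parent.
Proof.
move=> Ht; rewrite /contract; case: asboolP => [/inT_dom //|_].
by case: asboolP.
Qed.

Lemma contract_inT_inv k t : In k -> contract t = k -> t = k.
Proof.
move=> Hk; case: (zoneP t) => [Ht|[z [Hz Hzt]]|Ht].
- by rewrite contract_inT.
- by rewrite (contract_aux Hz Hzt) => Hzk; subst k; case: (aux_childP Hz).
- rewrite contract_out // => Hk'; subst k.
  by case: (root_parentP (not_dom_root Ht)) => _ _ []; exact: inT_dom.
Qed.

Lemma contract_aux_inv z t : aux z -> contract t = z -> dom z t.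
Proof.
move=> Hz; have [_ Hrz Hzn _] := aux_childP Hz.
case: (zoneP t) => [Ht|[z' [Hz' Hzt]]|Ht].
- by rewrite contract_inT // => Htz; subst t.
- by rewrite (contract_aux Hz' Hzt) => <-.
- rewrite contract_out // => Hk'; subst z.
  by case: (root_parentP (not_dom_root Ht)).
Qed.

Lemma contract_out_inv t : r <> s -> contract t = root_parent -> ~ dom r t.
Proof.
move=> Hrs; case: (root_parentP Hrs) => _ _ Hd.
case: (zoneP t) => [Ht|[z [Hz Hzt]]|//].
- by rewrite contract_inT // => Htz; subst t; case: Hd; exact: inT_dom.
- by rewrite (contract_aux Hz Hzt) => Hz'; subst z; case: Hd; case: (aux_childP Hz).
Qed.

Lemma aux_subtree_entry z a b : aux z -> dom z b -> ~ dom z a -> E a b ->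
  [/\ In a, idom E s a z & b = z].
Proof.
move=> Hz Hzb Hza Eab; have [u [Hu Huz Hbr]] := aux_child_bridge Hz.
by have [-> ->] := bridge_entering_edge Hbr Hzb Hza Eab.
Qed.

Lemma root_subtree_entry a b : ~ dom r a -> dom r b -> E a b ->
  a = root_parent /\ b = r.
Proof.
move=> Hra Hrb Eab; have [_ Hbr _] := root_parentP (not_dom_root Hra).
exact: bridge_entering_edge Hbr Hrb Hra Eab.
Qed.

Lemma contract_edge a b : E a b -> contract a <> contract b ->
  aux_edge E s r (contract a) (contract b).
Proof.
move=> Eab Hne; case: (zoneP a) => [Ha|[z [Hz Hza]]|Ha].
- rewrite (contract_inT Ha) in Hne *; case: (zoneP b) => [Hb|[z [Hz Hzb]]|Hb].
  + by rewrite contract_inT //; right; right; left.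
  + have Hza : ~ dom z a by move=> /(aux_child_below_notin Hz); apply.
    have [_ Haz ->] := aux_subtree_entry Hz Hzb Hza Eab.
    have [_ _ _ Hmz] := aux_childP Hz.
    by rewrite contract_aux_child //; left.
  + have [Hd _ _] := root_parentP (not_dom_root Hb).
    by rewrite contract_out //; do 3 right; left; exists b.
- rewrite (contract_aux Hz Hza) in Hne *; case: (zoneP b) => [Hb|[z' [Hz' Hz'b]]|Hb].
  + by rewrite contract_inT //; do 4 right; left; exists a.
  + exfalso; rewrite (contract_aux Hz' Hz'b) in Hne.
    case: (classic (dom z' a)) => Hz'a; first exact/Hne/(aux_child_uniq Hz Hz' Hza Hz'a).
    have [Ha _ _] := aux_subtree_entry Hz' Hz'b Hz'a Eab.
    exact: aux_child_below_notin Hz Hza Ha.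
  + have [Hd _ _] := root_parentP (not_dom_root Hb).
    by rewrite contract_out //; do 5 right; exists a, b.
- rewrite (contract_out Ha) in Hne *.
  have Hrb : dom r b.
    case: (zoneP b) => [/inT_dom //|[z' [Hz' Hz'b]]|Hb].
      by have [_ Hrz' _ _] := aux_childP Hz'; exact: dom_trans Hz'b.
    by rewrite contract_out in Hne.
  have [_ ->] := root_subtree_entry Ha Hrb Eab.
  have [Hd _ _] := root_parentP (not_dom_root Ha).
  rewrite contract_inT; last exact: inT_root.
  by right; left; split => //; exact: not_dom_root Ha.
Qed.

Fixpoint contract_walk x p : seq V :=
  if p is y :: q then
    if contract y == contract x then contract_walk y q else contract y :: contract_walk y q
  else [::].

Lemma contract_walkP x p : walk R x p ->
  walk (aux_edge E s r) (contract x) (contract_walk x p) /\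
  last (contract x) (contract_walk x p) = contract (last x p).
Proof.
elim: p x => [|y p IH] x //= [Exy /IH [Hw Hl]].
case: eqP => [<- //|Hne] /=; split => //; split => //.
by apply: contract_edge => //; exact: nesym.
Qed.

Lemma contract_walk_edges x p c d :
  (c, d) \in walk_edges (contract x) (contract_walk x p) ->
  exists a b, [/\ (a, b) \in walk_edges x p, contract a = c & contract b = d].
Proof.
elim: p x => [|y p IH] x //=; case: eqP => [Heq|_].
  rewrite -Heq => /IH [a [b [Hab Ha Hb]]].
  by exists a, b; rewrite walk_edges_cons in_cons Hab orbT.
rewrite walk_edges_cons in_cons => /orP [/eqP [-> ->]|/IH [a [b [Hab Ha Hb]]]].
  by exists x, y; rewrite walk_edges_cons mem_head.
by exists a, b; rewrite walk_edges_cons in_cons Hab orbT.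
Qed.

Lemma walk_crosses_aux_bridge z u x p t : aux z -> bridge E s u z -> walk R x p ->
  In x -> t \in x :: p -> contract t = z -> (u, z) \in walk_edges x p.
Proof.
move=> Hz Hbr Hp Hx Ht Htz; pose Q := fun t => contract t == z.
have Hxz : ~~ Q x.
  by rewrite /Q contract_inT //; apply/eqP => Hxz; subst x; case: (aux_childP Hz).
have HQp : has Q p.
  move: Ht; rewrite in_cons => /orP [/eqP Htx|Ht].
    by move: Hxz; rewrite /Q -Htx Htz eqxx.
  by apply/hasP; exists t; rewrite // /Q Htz.
have [a [b [Hab Ha /eqP Hb]]] := entering_edge Hxz HQp.
have Hza : ~ dom z a by move=> /(contract_aux Hz) Hza; rewrite /Q Hza eqxx in Ha.
by have [<- <-] := bridge_entering_edge Hbr (contract_aux_inv Hz Hb) Hza (walk_edge Hp Hab).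
Qed.

Lemma walk_crosses_root_bridge x p t : walk R x p -> In (last x p) -> t \in x :: p ->
  ~ dom r t -> (root_parent, r) \in walk_edges x p.
Proof.
move=> Hp Hl Ht Hrt; pose Q := fun t => ~~ asbool (dom r t).
have HQ : has Q (x :: p) by apply/hasP; exists t => //; apply/negP => /asboolP.
have HQl : ~~ Q (last x p) by rewrite /Q negbK; apply/asboolP; exact: inT_dom.
have [a [b [Hab /asboolP Ha /negPn /asboolP Hb]]] := leaving_edge HQ HQl.
by have [<- <-] := root_subtree_entry Ha Hb (walk_edge Hp Hab).
Qed.

(* Two edge-disjoint walks between vertices of [T(r)] cannot visit the same
   non-ordinary vertex of [G_r], since each would have to use its unique
   entry edge. *)
Lemma contract_collision x y p q t1 t2 : In x -> In y ->
  walk R x p -> last x p = y -> walk R x q -> last x q = y ->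
  all (fun e => e \notin walk_edges x q) (walk_edges x p) ->
  t1 \in x :: p -> t2 \in x :: q -> contract t1 = contract t2 -> In t1.
Proof.
move=> Hx Hy Hp Hlp Hq Hlq Hd Ht1 Ht2 Heq; apply: NNPP => HIt1.
case: (zoneP t1) => [//|[z [Hz Hzt]]|Hout].
- have [u [_ _ Hbr]] := aux_child_bridge Hz.
  have Ht2z : contract t2 = z by rewrite -Heq (contract_aux Hz Hzt).
  have Ht1z : contract t1 = z by rewrite (contract_aux Hz Hzt).
  exact: edge_disjoint_common Hd (walk_crosses_aux_bridge Hz Hbr Hp Hx Ht1 Ht1z)
    (walk_crosses_aux_bridge Hz Hbr Hq Hx Ht2 Ht2z).
- have Ht2o : ~ dom r t2.
    by apply: contract_out_inv (not_dom_root Hout) _; rewrite -Heq contract_out.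
  by apply: edge_disjoint_common Hd (walk_crosses_root_bridge Hp _ Ht1 Hout)
    (walk_crosses_root_bridge Hq _ Ht2 Ht2o); rewrite ?Hlp ?Hlq.
Qed.

Lemma contract_two_paths x y : In x -> In y -> two_edge_disjoint_paths R x y ->
  two_edge_disjoint_paths (aux_edge E s r) x y.
Proof.
move=> Hx Hy [p [q [Hp Hlp Hq Hlq Hd]]].
have [Wp Lp] := contract_walkP Hp; have [Wq Lq] := contract_walkP Hq.
rewrite contract_inT // in Wp Lp Wq Lq; rewrite Hlp contract_inT // in Lp.
rewrite Hlq contract_inT // in Lq.
exists (contract_walk x p), (contract_walk x q); split => //.
have collide := contract_collision Hx Hy Hp Hlp Hq Hlq Hd.
apply/allP => -[c d] Hcd; apply/negP => Hcd2.
rewrite -{1}(contract_inT Hx) in Hcd; rewrite -{1}(contract_inT Hx) in Hcd2.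
have [a1 [b1 [Hab1 Ha1 Hb1]]] := contract_walk_edges Hcd.
have [a2 [b2 [Hab2 Ha2 Hb2]]] := contract_walk_edges Hcd2.
have [Ha1m Hb1m] := mem_walk_edges Hab1; have [Ha2m Hb2m] := mem_walk_edges Hab2.
have HIa1 : In a1 by apply: (collide a1 a2) => //; rewrite Ha1 Ha2.
have HIb1 : In b1.
  by apply: (collide b1 b2); rewrite ?in_cons ?Hb1m ?Hb2m ?orbT // Hb1 Hb2.
rewrite contract_inT // in Ha1; rewrite contract_inT // in Hb1.
rewrite (contract_inT_inv HIa1 (etrans Ha2 (esym Ha1))) in Hab2.
rewrite (contract_inT_inv HIb1 (etrans Hb2 (esym Hb1))) in Hab2.
exact: edge_disjoint_common Hd Hab1 Hab2.
Qed.

Lemma aux_edge_to_aux_child a z : aux z -> aux_edge E s r a z -> idom E s a z.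
Proof.
move=> Hz; have [Hzr Hrz HIz _] := aux_childP Hz.
have Hzr' : ~ idom E s z r.
  by move/idom_dom => Hdz; apply: Hzr; exact: (dom_antisym Hsc Hdz Hrz).
case=> [[_ [_ Haz]] //|[[_ [/Hzr]]|[[_ [/HIz]]|[[v [_ _ _ /Hzr']]|
  [[u [_ /HIz]]|[u [v [_ _ _ _ /Hzr']]]]]]]] //.
Qed.

Lemma aux_edge_from_outside a b : ~ dom r a -> aux_edge E s r a b -> b = r.
Proof.
move=> Ha; have not_aux : ~ aux a by move=> /aux_childP [_ Hra _ _].
case=> [[/inT_dom //]|[[_ [-> _]] //|[[/inT_dom //]|[[v [_ /inT_dom //]]|
  [[u [_ _ /not_aux //]]|[u [v [_ /not_aux //]]]]]]]].
Qed.

(* An edge [e] of [G] realises the edge [e'] of [G_r] if it is contracted onto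
   [e'], or collapsed onto a non-ordinary endpoint of [e']. *)
Definition expands (e e' : V * V) : Prop :=
  (contract e.1 = e'.1 /\ contract e.2 = e'.2) \/
  [/\ contract e.1 = contract e.2, contract e.1 = e'.1 \/ contract e.1 = e'.2
    & ~ In (contract e.1)].

Lemma expands_source e e' : expands e e' -> contract e.1 = e'.1 \/ contract e.1 = e'.2.
Proof. by case=> [[-> _]|[]]; [left|]. Qed.

Lemma expands_inT e e' : expands e e' -> In (contract e.1) ->
  e' = (contract e.1, contract e.2).
Proof. by case=> [[-> ->]|[_ _ //]]; case: e'. Qed.

Definition expansion c d e' (seg : seq V) : Prop :=
  [/\ walk R c seg, last c seg = d & forall e, e \in walk_edges c seg -> expands e e'].

Lemma expansion_edge c d e' : E c d -> expands (c, d) e' -> expansion c d e' [:: d].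
Proof. by move=> Ecd He; split => // e; rewrite mem_seq1 => /eqP ->. Qed.

Lemma expansion_cat c m d e' seg1 seg2 : expansion c m e' seg1 -> expansion m d e' seg2 ->
  expansion c d e' (seg1 ++ seg2).
Proof.
move=> [W1 L1 H1] [W2 L2 H2]; split; first by apply/walk_cat; rewrite L1.
  by rewrite last_cat L1.
by move=> e; rewrite walk_edges_cat mem_cat L1 => /orP [/H1|/H2].
Qed.

Lemma outside_expansion c v : ~ dom r v ->
  exists seg, expansion v root_parent (c, root_parent) seg.
Proof.
move=> Hv; have Hrs := not_dom_root Hv; have [_ Hbr Hd] := root_parentP Hrs.
have [p [Hp Hl]] := Hsc v r; pose Q := fun t => asbool (dom r t).
have Hnv : ~~ Q v by apply/asboolP.
have HQp : has Q p.
  case: p Hp Hl => [|y p] Hp Hl; first by case: Hv; rewrite -Hl; exact: dom_refl.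
  by apply/hasP; exists (last y p); rewrite ?mem_last // /Q -Hl; apply/asboolP/dom_refl.
have [p1 [b [p2 [Hpe /allP Hout /asboolP Hb]]]] := split_first_entry Hnv HQp.
move: Hp; rewrite Hpe walk_cat => -[Hp1 /= [Eb _]].
have out t : t \in v :: p1 -> ~ dom r t by move/Hout => /= /asboolP.
have [Hl1 _] := bridge_entering_edge Hbr Hb (out _ (mem_last _ _)) Eb.
exists p1; split => // -[a a'] /(in_walk_edges out) [Ha Ha'].
by right; rewrite /= !contract_out //; split => //; [right | move/inT_dom].
Qed.

Lemma below_expansion z u d : aux z -> dom z u -> exists seg, expansion z u (z, d) seg.
Proof.
move=> Hz /(walk_in_dom_subtree Hsc) [seg [Hw Hl Hin]].
exists seg; split => // -[a a'] /(in_walk_edges Hin) [Ha Ha'].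
have [_ _ HIz _] := aux_childP Hz.
by right; rewrite /= (contract_aux Hz Ha) (contract_aux Hz Ha'); split => //; left.
Qed.

Lemma aux_edge_expansion c d : aux_edge E s r c d -> exists seg, expansion c d (c, d) seg.
Proof.
have root_edge c' : idom E s c' r -> c' = root_parent /\ r <> s.
  move=> Hc'; have Hrs : r <> s by case: Hc'.
  by have [Hp _ _] := root_parentP Hrs; split => //; exact: (idom_uniq Hsc Hc' Hp).
case=> [[Hc [Hmd Hcd]]|[[Hrs [-> Hcr]]|[[Hc [Hd Ecd]]|[[v [Ecv Hc Hv /root_edge [-> _]]]|
  [[u [Eud Hd Hca Hcu]]|[u [v [Euv Hca Hcu Hv /root_edge [-> _]]]]]]]]].
- have Hauxd : aux d by split => //; exists c.
  have [_ [u [Hud Hbr]]] := Hmd; rewrite (idom_uniq Hsc Hud Hcd) in Hbr.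
  exists [:: d]; apply: expansion_edge; first exact: bridge_edge Hbr.
  by left; rewrite /= contract_inT // contract_aux_child.
- have [-> _] := root_edge _ Hcr; have [_ Hbr Hd] := root_parentP Hrs.
  exists [:: r]; apply: expansion_edge; first exact: bridge_edge Hbr.
  by left; rewrite /= contract_out // contract_inT //; exact: inT_root.
- by exists [:: d]; apply: expansion_edge => //; left; rewrite /= !contract_inT.
- have [seg Hseg] := outside_expansion c Hv; exists (v :: seg).
  apply: (expansion_cat (seg1 := [:: v]) _ Hseg); apply: expansion_edge => //.
  by left; rewrite /= contract_inT // contract_out.
- have [seg Hseg] := below_expansion d Hca Hcu; exists (seg ++ [:: d]).
  apply: (expansion_cat Hseg); apply: expansion_edge => //.
  by left; rewrite /= (contract_aux Hca Hcu) contract_inT.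
- have [seg1 Hseg1] := below_expansion root_parent Hca Hcu.
  have [seg2 Hseg2] := outside_expansion c Hv; exists (seg1 ++ v :: seg2).
  apply: (expansion_cat Hseg1); apply: (expansion_cat (seg1 := [:: v]) _ Hseg2).
  by apply: expansion_edge => //; left; rewrite /= (contract_aux Hca Hcu) contract_out.
Qed.

Lemma expand_walk c P : walk (aux_edge E s r) c P -> exists p,
  [/\ walk R c p, last c p = last c P &
      forall e, e \in walk_edges c p -> exists2 e', e' \in walk_edges c P & expands e e'].
Proof.
elim: P c => [|d P IH] c /=; first by exists [::].
move=> [/aux_edge_expansion [seg [Hw Hl Hseg]] /IH [p [Hp Hlp Hexp]]].
exists (seg ++ p); split; [by apply/walk_cat; rewrite Hl | by rewrite last_cat Hl |].
move=> e; rewrite walk_edges_cat mem_cat Hl walk_edges_cons.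
case/orP => [/Hseg He|/Hexp [e' He' Hee']].
  by exists (c, d); rewrite ?mem_head.
by exists e'; rewrite // in_cons He' orbT.
Qed.

Lemma aux_walk_enters_aux_child x z W : In x -> aux z ->
  walk (aux_edge E s r) x W -> z \in x :: W ->
  exists a, idom E s a z /\ (a, z) \in walk_edges x W.
Proof.
move=> Hx Hz HW HzW; have [_ _ HIz _] := aux_childP Hz.
have Hxz : x != z by apply: contra_notN HIz => /eqP <-.
have HzW' : has (pred1 z) W.
  by apply/hasP; exists z; rewrite //=; move: HzW; rewrite in_cons eq_sym (negPf Hxz).
have [a [b [Hab _ /eqP Hb]]] := entering_edge (Q := pred1 z) Hxz HzW'.
by subst b; exists a; split => //; apply: aux_edge_to_aux_child Hz (walk_edge HW Hab).
Qed.

Lemma aux_walk_crosses_root_edge x y W : r <> s -> In y ->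
  walk (aux_edge E s r) x W -> last x W = y -> root_parent \in x :: W ->
  (root_parent, r) \in walk_edges x W.
Proof.
move=> Hrs Hy HW HlW HdW; have [_ _ Hd] := root_parentP Hrs.
have H1 : has (pred1 root_parent) (x :: W).
  by apply/hasP; exists root_parent; rewrite /= ?eqxx.
have H2 : ~~ pred1 root_parent (last x W).
  by rewrite /= HlW; apply/eqP => Hyd; apply: Hd; rewrite -Hyd; exact: inT_dom.
have [a [b [Hab /eqP Ha _]]] := leaving_edge H1 H2; subst a.
by have <- := aux_edge_from_outside Hd (walk_edge HW Hab).
Qed.

Lemma aux_paths_collision x y P Q k a : In x -> In y ->
  walk (aux_edge E s r) x P -> last x P = y -> walk (aux_edge E s r) x Q -> last x Q = y ->
  all (fun e => e \notin walk_edges x Q) (walk_edges x P) ->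
  k \in x :: P -> k \in x :: Q -> contract a = k -> In k.
Proof.
move=> Hx Hy HP HlP HQ HlQ Hd HkP HkQ Ha; apply: NNPP => HIk.
case: (zoneP a) => [HIa|[z [Hz Hza]]|Hoa].
- by rewrite contract_inT // in Ha; subst k; apply: HIk.
- rewrite (contract_aux Hz Hza) in Ha; subst k.
  have [a1 [Ha1 E1]] := aux_walk_enters_aux_child Hx Hz HP HkP.
  have [a2 [Ha2 E2]] := aux_walk_enters_aux_child Hx Hz HQ HkQ.
  rewrite (idom_uniq Hsc Ha1 Ha2) in E1; exact: edge_disjoint_common Hd E1 E2.
- have Hrs := not_dom_root Hoa; rewrite contract_out // in Ha; subst k.
  exact: edge_disjoint_common Hd (aux_walk_crosses_root_edge Hrs Hy HP HlP HkP)
    (aux_walk_crosses_root_edge Hrs Hy HQ HlQ HkQ).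
Qed.

Lemma expanded_two_paths x y : In x -> In y ->
  two_edge_disjoint_paths (aux_edge E s r) x y -> two_edge_disjoint_paths R x y.
Proof.
move=> Hx Hy [P [Q [HP HlP HQ HlQ Hd]]].
have [p [Hp Hlp Hbp]] := expand_walk HP; have [q [Hq Hlq Hbq]] := expand_walk HQ.
exists p, q; split; rewrite ?Hlp ?Hlq //.
apply/allP => -[a b] Hab_p; apply/negP => Hab_q.
have [[c1 d1] He1 Hexp1] := Hbp _ Hab_p; have [[c2 d2] He2 Hexp2] := Hbq _ Hab_q.
have HIa : In (contract a).
  apply: (aux_paths_collision Hx Hy HP HlP HQ HlQ Hd _ _ erefl).
    exact: mem_walk_edges_endpoint He1 (expands_source Hexp1).
  exact: mem_walk_edges_endpoint He2 (expands_source Hexp2).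
move: He2; rewrite (expands_inT Hexp2 HIa) -(expands_inT Hexp1 HIa) => He2.
exact: edge_disjoint_common Hd He1 He2.
Qed.

End Contraction.

Theorem mainTheorem10 (V : finType) (E : rel V) (s v w : V) :
  strongly_connected E -> v <> w ->
  (two_edge_conn (edgeP E) v w <->
   exists r : V, [/\ subtree_root E s r, inT E s r v, inT E s r w &
                     two_edge_conn (aux_edge E s r) v w]).
Proof.
move=> Hsc Hvw; split.
- case=> [//|[Hvw2 Hwv2]]; have [r Hrv] := inT_exists s Hsc v.
  have Hrw := inT_two_paths Hrv Hvw2 Hwv2; have [Hr _ _] := Hrv.
  by exists r; split => //; right; split; apply: (contract_two_paths Hsc Hr).
- case=> r [Hr Hv Hw [//|[Hvw2 Hwv2]]].
  by right; split; apply: (expanded_two_paths Hsc Hr).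
Qed.
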